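(* If $U$ is a Clifford+$V$ operator, then $U=ABC$ where $A$ is a product of $V$-gates, $B$ is a Pauli+$S$ operator, and $C$ is one of $I$, $H$, $HS$, $\omega I$, $H\omega$, $HS\omega$.
   Context: Let $\omega=e^{i\pi/4}$, $H=\frac{1}{\sqrt2}\begin{bmatrix}1&1\\1&-1\end{bmatrix}$, $S=\begin{bmatrix}1&0\\0&i\end{bmatrix}$, $X=\begin{bmatrix}0&1\\1&0\end{bmatrix}$, $Y=\begin{bmatrix}0&-i\\i&0\end{bmatrix}$, $Z=\begin{bmatrix}1&0\\0&-1\end{bmatrix}$. The $V$-gates are $V_X=\frac{1}{\sqrt5}\begin{bmatrix}1&2i\\2i&1\end{bmatrix}$, $V_Y=\frac{1}{\sqrt5}\begin{bmatrix}1&2\\-2&1\end{bmatrix}$, $V_Z=\frac{1}{\sqrt5}\begin{bmatrix}1+2i&0\\0&1-2i\end{bmatrix}$ and their inverses. A Clifford+$V$ operator is an element of the group generated by $\omega I$, $H$, $S$, $V_X,V_Y,V_Z$. A Pauli+$S$ operator is an element of the group generated by $X,Y,Z,S$. *)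

From HB Require Import structures.
From mathcomp Require Import all_boot all_order all_algebra all_field.
Set Implicit Arguments. Unset Strict Implicit. Unset Printing Implicit Defensive.
Import Order.TTheory GRing.Theory Num.Theory.
Local Open Scope ring_scope.

Definition mx2 (a b c d : algC) : 'M[algC]_2 :=
  \matrix_(i < 2, j < 2)
    if i == 0 :> nat then (if j == 0 :> nat then a else b)
    else (if j == 0 :> nat then c else d).

(* omega = e^{i pi/4} = (1 + i)/sqrt 2 *)
Definition omega : algC := (1 + 'i) / sqrtC 2.
Definition omegaI : 'M[algC]_2 := omega%:M.

Definition Hg : 'M[algC]_2 := (sqrtC 2)^-1 *: mx2 1 1 1 (-1).
Definition Sg : 'M[algC]_2 := mx2 1 0 0 'i.
Definition Xg : 'M[algC]_2 := mx2 0 1 1 0.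
Definition Yg : 'M[algC]_2 := mx2 0 (-'i) 'i 0.
Definition Zg : 'M[algC]_2 := mx2 1 0 0 (-1).

Definition VX : 'M[algC]_2 := (sqrtC 5)^-1 *: mx2 1 (2 * 'i) (2 * 'i) 1.
Definition VY : 'M[algC]_2 := (sqrtC 5)^-1 *: mx2 1 2 (-2) 1.
Definition VZ : 'M[algC]_2 := (sqrtC 5)^-1 *: mx2 (1 + 2 * 'i) 0 0 (1 - 2 * 'i).

Inductive generated (gens : 'M[algC]_2 -> Prop) : 'M[algC]_2 -> Prop :=
  | gen_one : generated gens 1
  | gen_mul g M : gens g -> generated gens M -> generated gens (g *m M)
  | gen_inv g M : gens g -> generated gens M -> generated gens (invmx g *m M).

Definition V_gens (g : 'M[algC]_2) : Prop := g = VX \/ g = VY \/ g = VZ.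

Definition clifford_V (U : 'M[algC]_2) : Prop :=
  generated (fun g => g = omegaI \/ g = Hg \/ g = Sg \/ V_gens g) U.

Definition V_product (A : 'M[algC]_2) : Prop := generated V_gens A.

Definition pauli_S (B : 'M[algC]_2) : Prop :=
  generated (fun g => g = Xg \/ g = Yg \/ g = Zg \/ g = Sg) B.

From HB Require Import structures.
From mathcomp Require Import all_boot all_order all_algebra all_field.
From mathcomp Require Import ring.

Set Implicit Arguments.
Unset Strict Implicit.
Unset Printing Implicit Defensive.

Import Order.TTheory GRing.Theory Num.Theory.
Local Open Scope ring_scope.

(* Write a unitary as omega^m * A * X^b S^c * C with A a product of V-gates and
   C in {I, H, HS}; this shape is preserved by left multiplication with every
   generator and its inverse.  omega is central.  Conjugation by S and by H
   permutes V_X, V_Y, V_Z up to inversion, so both normalise the group of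
   V-products.  S moves past X^b S^c at the cost of a power of i = omega^2,
   and H turns X^b into Z^b = S^(2b) while H S^r C is again a phase times
   X^b' S^c' C' (twelve cases, r taken mod 4). *)

Lemma mulmx_exprS (R : pzSemiRingType) n (M : 'M[R]_n) k : M ^+ k.+1 = M *m M ^+ k.
Proof. by rewrite exprS mulmxE. Qed.

Lemma mulmx_exprD (R : pzSemiRingType) n (M : 'M[R]_n) k l :
  M ^+ (k + l)%N = M ^+ k *m M ^+ l.
Proof. by rewrite exprD mulmxE. Qed.

Lemma mulmx_scalar_mid (R : comPzSemiRingType) m n p
    (A : 'M[R]_(m, n)) (B : 'M[R]_(n, p)) z :
  A *m (z%:M *m B) = z%:M *m (A *m B).
Proof. by rewrite mulmxA scalar_mxC mulmxA. Qed.

Lemma invmx_eq (R : comUnitRingType) n (A B : 'M[R]_n) :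
  A *m B = 1%:M -> invmx A = B.
Proof.
move=> AB; have [Aunit _] := mulmx1_unit AB.
by rewrite -[invmx A]mulmx1 -AB mulKmx.
Qed.

Lemma conj_invmx (R : comUnitRingType) n (g v w : 'M[R]_n) :
  g \in unitmx -> v \in unitmx -> g *m v = w *m g -> g *m invmx v = invmx w *m g.
Proof.
move=> gU vU gv; have wE : w = g *m v *m invmx g by rewrite gv mulmxK.
have wU : w \in unitmx by rewrite wE !unitmx_mul unitmx_inv gU vU.
by apply: (canRL (mulKmx wU)); rewrite mulmxA -gv -mulmxA mulmxV // mulmx1.
Qed.

Lemma mx2_mul a b c d e f g h :
  mx2 a b c d *m mx2 e f g h =
  mx2 (a * e + b * g) (a * f + b * h) (c * e + d * g) (c * f + d * h).
Proof.
apply/matrixP => i j; rewrite !mxE !big_ord_recl big_ord0 !mxE addr0.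
by case: i => [[|[|?]] ?] //; case: j => [[|[|?]] ?].
Qed.

Lemma mx2_scale k a b c d : k *: mx2 a b c d = mx2 (k * a) (k * b) (k * c) (k * d).
Proof.
apply/matrixP => i j; rewrite !mxE.
by case: i => [[|[|?]] ?] //; case: j => [[|[|?]] ?].
Qed.

Lemma mx2_scalar a : a%:M = mx2 a 0 0 a.
Proof.
apply/matrixP => i j; rewrite !mxE.
by case: i => [[|[|?]] ?] //; case: j => [[|[|?]] ?].
Qed.

Lemma mx2_1 : 1 = mx2 1 0 0 1. Proof. exact: mx2_scalar. Qed.

Lemma det_mx2 a b c d : \det (mx2 a b c d) = a * d - b * c.
Proof.
rewrite (expand_det_row _ 0) !big_ord_recl big_ord0 addr0 /cofactor.
rewrite !det_mx11 !mxE /= !expr0 !expr1 !mul1r mulN1r mulrN.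
by rewrite addrC.
Qed.

Lemma sqrtC2_neq0 : sqrtC 2 != 0 :> algC. Proof. by rewrite sqrtC_eq0 pnatr_eq0. Qed.
Lemma sqrtC5_neq0 : sqrtC 5 != 0 :> algC. Proof. by rewrite sqrtC_eq0 pnatr_eq0. Qed.

Ltac mx2_compute :=
  rewrite ?mulmx_exprS ?expr0 /Hg /Sg /Xg /Yg /Zg /VX /VY /VZ /omegaI /omega ?mx2_1 ?mx2_scalar
          ?(mx2_scale, mx2_mul) ?detZ ?det_mx2;
  try congr mx2;
  field: (@sqrCi algC) (sqrtCK (2 : algC)) (sqrtCK (5 : algC));
  rewrite ?mulf_neq0 ?sqrtC2_neq0 ?sqrtC5_neq0 //.

Section Generated.

Variable gens : 'M[algC]_2 -> Prop.

Lemma generated_gen g : gens g -> generated gens g.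
Proof. by move=> gg; rewrite -[g]mulmx1; apply: gen_mul => //; apply: gen_one. Qed.

Lemma generated_mul M N :
  generated gens M -> generated gens N -> generated gens (M *m N).
Proof.
move=> gM gN; elim: gM => [|g M' gg _ IH|g M' gg _ IH]; first by rewrite mul1mx.
- by rewrite -mulmxA; apply: gen_mul.
- by rewrite -mulmxA; apply: gen_inv.
Qed.

Lemma generated_exp M n : generated gens M -> generated gens (M ^+ n).
Proof.
move=> gM; elim: n => [|n IH]; first exact: gen_one.
by rewrite exprS -mulmxE; apply: generated_mul.
Qed.

Lemma generated_conj (g : 'M[algC]_2) :
    g \in unitmx -> (forall v, gens v -> v \in unitmx) ->
    (forall v, gens v -> exists2 w, gens w & g *m v = w *m g \/ g *m v = invmx w *m g) ->
  forall M, generated gens M -> exists2 M', generated gens M' & g *m M = M' *m g.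
Proof.
move=> gU gensU gconj M; elim=> [|v M' gv _ [N gN gM]|v M' gv _ [N gN gM]].
- by exists 1; [apply: gen_one | rewrite mul1mx mulmx1].
- have [w gw [E|E]] := gconj v gv.
  + by exists (w *m N); [apply: gen_mul | rewrite mulmxA E -mulmxA gM mulmxA].
  + by exists (invmx w *m N); [apply: gen_inv | rewrite mulmxA E -mulmxA gM mulmxA].
- have vU := gensU v gv; have [w gw [E|E]] := gconj v gv.
  + exists (invmx w *m N); first exact: gen_inv.
    by rewrite mulmxA (conj_invmx gU vU E) -mulmxA gM mulmxA.
  + exists (w *m N); first exact: gen_mul.
    by rewrite mulmxA (conj_invmx gU vU E) invmxK -[RHS]mulmxA -gM mulmxA.
Qed.

End Generated.

Lemma det_V_gens v : V_gens v -> \det v = 1.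
Proof. by case=> [|[|]] ->; mx2_compute. Qed.

Lemma V_gens_unit v : V_gens v -> v \in unitmx.
Proof. by move/det_V_gens; rewrite unitmxE => ->; apply: unitr1. Qed.

Lemma Hg_mulmx_Hg : Hg *m Hg = 1%:M. Proof. by mx2_compute. Qed.
Lemma Sg_mulmx_Sg3 : Sg *m Sg ^+ 3 = 1%:M. Proof. by mx2_compute. Qed.
Lemma omegaI_mulmx_omega7 : omegaI *m (omega ^+ 7)%:M = 1%:M. Proof. by mx2_compute. Qed.

Lemma Hg_unit : Hg \in unitmx. Proof. exact: (mulmx1_unit Hg_mulmx_Hg).1. Qed.
Lemma Sg_unit : Sg \in unitmx. Proof. exact: (mulmx1_unit Sg_mulmx_Sg3).1. Qed.

Lemma S_conj_V_product A :
  V_product A -> exists2 A', V_product A' & Sg *m A = A' *m Sg.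
Proof.
apply: generated_conj; [exact: Sg_unit | exact: V_gens_unit |].
have VXU : VX \in unitmx by apply: V_gens_unit; left.
move=> v [|[|]] ->.
- by exists VY; [right; left | left; mx2_compute].
- exists VX; [by left | right; apply: (canRL (mulKmx VXU)); mx2_compute].
- by exists VZ; [right; right | left; mx2_compute].
Qed.

Lemma H_conj_V_product A :
  V_product A -> exists2 A', V_product A' & Hg *m A = A' *m Hg.
Proof.
apply: generated_conj; [exact: Hg_unit | exact: V_gens_unit |].
have VYU : VY \in unitmx by apply: V_gens_unit; right; left.
move=> v [|[|]] ->.
- by exists VZ; [right; right | left; mx2_compute].
- exists VY; [by right; left | right; apply: (canRL (mulKmx VYU)); mx2_compute].
- by exists VX; [left | left; mx2_compute].
Qed.

(* Locked, so that rewriting with [mulmxA] cannot unfold it. *)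
Fact pauli_nf_key : unit. Proof. by []. Qed.
Definition pauli_nf (b : bool) (c : nat) : 'M[algC]_2 :=
  locked_with pauli_nf_key (Xg ^+ b *m Sg ^+ c).
Lemma pauli_nfE b c : pauli_nf b c = Xg ^+ b *m Sg ^+ c.
Proof. by rewrite /pauli_nf unlock. Qed.

Lemma Xg_exp_addb (b b' : bool) : Xg ^+ b *m Xg ^+ b' = Xg ^+ (b (+) b').
Proof.
have XX : Xg *m Xg = 1 by mx2_compute.
by case: b; case: b'; rewrite /= ?expr0 ?expr1 ?mul1mx ?mulmx1.
Qed.

Lemma Sg_exp_Xg c : Sg ^+ c *m Xg = ('i ^+ c)%:M *m Xg *m Sg ^+ (3 * c)%N.
Proof.
have SX : Sg *m Xg = 'i%:M *m Xg *m Sg ^+ 3 by mx2_compute.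
elim: c => [|c IH]; first by rewrite !expr0 mul1mx mulmx1.
rewrite mulmx_exprS -mulmxA IH !mulmxA (scalar_mxC _ Sg) -(mulmxA _ Sg) SX.
by rewrite !mulmxA -scalar_mxM -exprSr mulnSr addnC mulmx_exprD !mulmxA.
Qed.

Lemma Sg_exp_Xg_exp c (b : bool) :
  Sg ^+ c *m Xg ^+ b = ('i ^+ (b * c)%N)%:M *m Xg ^+ b *m Sg ^+ (3 ^ b * c)%N.
Proof.
case: b => /=; first by rewrite expr1 mul1n expn1 Sg_exp_Xg.
by rewrite mul0n expn0 mul1n !expr0 mul1mx mulmx1 mul1mx.
Qed.

Lemma pauli_nf_mul b c b' c' :
  pauli_nf b c *m pauli_nf b' c' =
  ('i ^+ (b' * c)%N)%:M *m pauli_nf (b (+) b') (3 ^ b' * c + c')%N.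
Proof.
rewrite !pauli_nfE mulmxA -(mulmxA (Xg ^+ b)) Sg_exp_Xg_exp !mulmxA.
by rewrite (scalar_mxC _ (Xg ^+ b)) -(mulmxA _ (Xg ^+ b)) Xg_exp_addb mulmx_exprD !mulmxA.
Qed.

Lemma pauli_S_pauli_nf b c : pauli_S (pauli_nf b c).
Proof.
by rewrite pauli_nfE; apply: generated_mul; apply: generated_exp; apply: generated_gen;
  [left | right; right; right].
Qed.

Lemma pauli_S_scalar_i n : pauli_S ('i ^+ n)%:M.
Proof.
have XYZ : 'i%:M = Xg *m Yg *m Zg by mx2_compute.
rewrite (rmorphXn (@scalar_mx algC 2)) /= XYZ; apply: generated_exp.
by apply: generated_mul; [apply: generated_mul|]; apply: generated_gen;
  [left | right; left | right; right; left].
Qed.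

Lemma Sg_exp_mod4 c : Sg ^+ c = Sg ^+ (c %% 4).
Proof.
have S4 : Sg ^+ 4 = 1 by mx2_compute.
by rewrite {1}(divn_eq c 4) mulmx_exprD (mulnC (c %/ 4)%N) exprM S4 expr1n mul1mx.
Qed.

Lemma Hg_Xg_exp (b : bool) : Hg *m Xg ^+ b = Sg ^+ (2 * b)%N *m Hg.
Proof. by case: b; [mx2_compute | rewrite !expr0 mul1mx mulmx1]. Qed.

Lemma Hg_pauli_nf b c : Hg *m pauli_nf b c = pauli_nf false (2 * b)%N *m Hg *m Sg ^+ c.
Proof. by rewrite !pauli_nfE mulmxA Hg_Xg_exp expr0 mul1mx. Qed.

Inductive coset_rep := rep_1 | rep_H | rep_HS.

Definition coset_rep_mx (k : coset_rep) : 'M[algC]_2 :=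
  match k with rep_1 => 1 | rep_H => Hg | rep_HS => Hg *m Sg end.

Lemma Hg_Sg_exp_coset_rep r k : exists m b c k',
  Hg *m Sg ^+ r *m coset_rep_mx k = (omega ^+ m)%:M *m pauli_nf b c *m coset_rep_mx k'.
Proof.
rewrite Sg_exp_mod4; have : (r %% 4 < 4)%N by rewrite ltn_pmod.
case: (r %% 4)%N => [|[|[|[|//]]]] _; case: k.
- by exists 0%N, false, 0%N, rep_H; rewrite pauli_nfE /coset_rep_mx; mx2_compute.
- by exists 0%N, false, 0%N, rep_1; rewrite pauli_nfE /coset_rep_mx; mx2_compute.
- by exists 0%N, false, 1%N, rep_1; rewrite pauli_nfE /coset_rep_mx; mx2_compute.
- by exists 0%N, false, 0%N, rep_HS; rewrite pauli_nfE /coset_rep_mx; mx2_compute.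
- by exists 7%N, true, 1%N, rep_HS; rewrite pauli_nfE /coset_rep_mx; mx2_compute.
- by exists 1%N, false, 3%N, rep_H; rewrite pauli_nfE /coset_rep_mx; mx2_compute.
- by exists 0%N, true, 0%N, rep_H; rewrite pauli_nfE /coset_rep_mx; mx2_compute.
- by exists 0%N, true, 0%N, rep_1; rewrite pauli_nfE /coset_rep_mx; mx2_compute.
- by exists 0%N, true, 1%N, rep_1; rewrite pauli_nfE /coset_rep_mx; mx2_compute.
- by exists 0%N, true, 0%N, rep_HS; rewrite pauli_nfE /coset_rep_mx; mx2_compute.
- by exists 7%N, false, 1%N, rep_HS; rewrite pauli_nfE /coset_rep_mx; mx2_compute.
- by exists 1%N, true, 3%N, rep_H; rewrite pauli_nfE /coset_rep_mx; mx2_compute.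
Qed.


Lemma omega_sqr : omega ^+ 2 = 'i.
Proof. by rewrite /omega; field: (@sqrCi algC) (sqrtCK (2 : algC)); rewrite sqrtC2_neq0. Qed.

(* The scalar [omega ^+ m] collects the phases [i] of the Pauli+S factor as well
   as the factor [omega] of the paper's C; it is split as i^(m/2) * omega^(m mod 2)
   only at the very end. *)
Definition clifford_V_form (M : 'M[algC]_2) : Prop := exists m A b c k,
  V_product A /\ M = (omega ^+ m)%:M *m (A *m pauli_nf b c *m coset_rep_mx k).

Lemma clifford_V_form_omega m M :
  clifford_V_form M -> clifford_V_form ((omega ^+ m)%:M *m M).
Proof.
move=> [n [A [b [c [k [hA ->]]]]]].
by exists (m + n)%N, A, b, c, k; rewrite mulmxA -scalar_mxM -exprD.
Qed.

Lemma clifford_V_form_V v M : V_gens v -> clifford_V_form M ->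
  clifford_V_form (v *m M) /\ clifford_V_form (invmx v *m M).
Proof.
move=> gv [n [A [b [c [k [hA ->]]]]]]; split.
- exists n, (v *m A), b, c, k; split; first exact: gen_mul.
  by rewrite mulmx_scalar_mid !mulmxA.
- exists n, (invmx v *m A), b, c, k; split; first exact: gen_inv.
  by rewrite mulmx_scalar_mid !mulmxA.
Qed.

Lemma clifford_V_form_S M : clifford_V_form M -> clifford_V_form (Sg *m M).
Proof.
move=> [n [A [b [c [k [hA ->]]]]]].
have [A' hA' SA] := S_conj_V_product hA.
have SP : Sg *m pauli_nf b c = ('i ^+ b)%:M *m pauli_nf b (3 ^ b + c)%N.
  by have := pauli_nf_mul false 1 b c; rewrite !pauli_nfE !expr0 expr1 !mul1mx !muln1.
exists (n + 2 * b)%N, A', b, (3 ^ b + c)%N, k; split => //.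
have E : Sg *m (A *m pauli_nf b c *m coset_rep_mx k) =
    ('i ^+ b)%:M *m (A' *m pauli_nf b (3 ^ b + c)%N *m coset_rep_mx k).
  by rewrite !mulmxA SA -(mulmxA A') SP mulmx_scalar_mid !mulmxA.
by rewrite mulmx_scalar_mid E (mulmxA (omega ^+ n)%:M) -scalar_mxM -omega_sqr -exprM -exprD.
Qed.

Lemma clifford_V_form_H M : clifford_V_form M -> clifford_V_form (Hg *m M).
Proof.
move=> [n [A [b [c [k [hA ->]]]]]].
have [A' hA' HA] := H_conj_V_product hA.
have [m [b1 [c1 [k' HSR]]]] := Hg_Sg_exp_coset_rep c k.
set P0 := pauli_nf false (2 * b)%N.
have E : Hg *m (A *m pauli_nf b c *m coset_rep_mx k) =
    (omega ^+ m)%:M *m (A' *m (P0 *m pauli_nf b1 c1) *m coset_rep_mx k').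
  rewrite !mulmxA HA -(mulmxA A' Hg) Hg_pauli_nf !mulmxA -!(mulmxA (A' *m P0)) HSR.
  by rewrite -(mulmxA (omega ^+ m)%:M) mulmx_scalar_mid !mulmxA.
exists (n + m + 2 * (b1 * (2 * b)))%N, A', b1, (3 ^ b1 * (2 * b) + c1)%N, k'.
split => //; rewrite mulmx_scalar_mid E /P0 pauli_nf_mul addFb (mulmx_scalar_mid A').
by rewrite -(mulmxA ('i ^+ _)%:M) !mulmxA -!scalar_mxM -exprD -omega_sqr -exprM -exprD.
Qed.

Lemma clifford_V_form_exp g n M :
  (forall N, clifford_V_form N -> clifford_V_form (g *m N)) ->
  clifford_V_form M -> clifford_V_form (g ^+ n *m M).
Proof.
move=> gform Mform; elim: n => [|n IH]; first by rewrite expr0 mul1mx.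
by rewrite mulmx_exprS -mulmxA; apply: gform.
Qed.

Lemma clifford_V_has_form U : clifford_V U -> clifford_V_form U.
Proof.
elim=> [|g M gg _ IH|g M gg _ IH].
- exists 0%N, 1, false, 0%N, rep_1; split; first exact: gen_one.
  by rewrite pauli_nfE /= !expr0 !mulmxE !mulr1.
- case: gg => [->|[->|[->|gv]]].
  + exact: (clifford_V_form_omega 1 IH).
  + exact: clifford_V_form_H.
  + exact: clifford_V_form_S.
  + exact: (clifford_V_form_V gv IH).1.
- case: gg => [->|[->|[->|gv]]].
  + by rewrite (invmx_eq omegaI_mulmx_omega7); apply: clifford_V_form_omega.
  + by rewrite (invmx_eq Hg_mulmx_Hg); apply: clifford_V_form_H.
  + rewrite (invmx_eq Sg_mulmx_Sg3); apply: clifford_V_form_exp => //.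
    exact: clifford_V_form_S.
  + exact: (clifford_V_form_V gv IH).2.
Qed.



Lemma omega_exp_split m : omega ^+ m = 'i ^+ m./2 * omega ^+ odd m.
Proof. by rewrite -{1}(odd_double_half m) -mul2n exprD exprM omega_sqr mulrC. Qed.

Theorem lemma6p5 (U : 'M[algC]_2) :
  clifford_V U ->
  exists A B C : 'M[algC]_2,
    [/\ V_product A, pauli_S B,
        C \in [:: 1; Hg; Hg *m Sg; omegaI; Hg *m omegaI; Hg *m Sg *m omegaI]
      & U = A *m B *m C].
Proof.
move=> /clifford_V_has_form [m [A [b [c [k [hA ->]]]]]].
exists A, (('i ^+ m./2)%:M *m pauli_nf b c), (coset_rep_mx k *m (omega ^+ odd m)%:M).
split => //.
- by apply: generated_mul; [apply: pauli_S_scalar_i | apply: pauli_S_pauli_nf].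
- by case: k; case: (odd m); rewrite /= ?expr0 ?expr1 ?mul1mx ?mulmx1 !inE eqxx ?orbT.
rewrite omega_exp_split scalar_mxM (mulmx_scalar_mid A) [RHS]mulmxA [RHS]scalar_mxC.
by rewrite (scalar_mxC (omega ^+ _)) !mulmxA.
Qed.
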